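(* For any $p\in(0,1/2]$ there is $\gamma>0$ depending only on $p$ such that for every $\varepsilon\in(0,1]$, every $n\geq 2$, every $s\in\mathbb{R}$ and every $x\in S^{n-1}$, $$\mathbb{P}\big\{\|(B_n^1(p)+s\,1_{n-1}1_n^\top)x\|_2\leq \gamma\sqrt{\varepsilon n}\big\}\leq \Big(\frac{e}{\varepsilon}\Big)^{\varepsilon(n-1)}(1-p)^{(n-1)(1-\varepsilon)}.$$
   Context: $B_n(p)$ is the $n\times n$ random matrix with i.i.d. entries taking value $1$ with probability $p$ and $0$ with probability $1-p$; $B_n^1(p)$ is the $(n-1)\times n$ matrix obtained from $B_n(p)$ by removing the last row. $1_m$ is the $m$-dimensional vector of all ones; $S^{n-1}$ is the unit Euclidean sphere in $\mathbb{R}^n$. *)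

From HB Require Import structures.
From mathcomp Require Import all_boot all_order all_algebra.
From mathcomp Require Import all_classical all_reals all_analysis.
Set Implicit Arguments. Unset Strict Implicit. Unset Printing Implicit Defensive.
Import Order.TTheory GRing.Theory Num.Theory.
Local Open Scope ring_scope.

(* Law of a random m x n matrix with i.i.d. Bernoulli(p) entries (true = 1):
   the probability of a 0/1 matrix M is p^{#ones} (1-p)^{#zeros}. *)
Definition bern_weight (R : realType) (p : R) (m n : nat) (M : 'M[bool]_(m, n)) : R :=
  \prod_(i < m) \prod_(j < n) (if M i j then p else 1 - p).

Definition bern_prob (R : realType) (p : R) (m n : nat) (E : pred 'M[bool]_(m, n)) : R :=
  \sum_(M : 'M[bool]_(m, n) | E M) bern_weight p M.

Definition mx01 (R : realType) (m n : nat) (M : 'M[bool]_(m, n)) : 'M[R]_(m, n) :=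
  \matrix_(i, j) (M i j)%:R.

Definition norm2 (R : realType) (m : nat) (v : 'cV[R]_m) : R :=
  Num.sqrt (\sum_(i < m) v i 0 ^+ 2).

Definition ones_mx (R : realType) (m n : nat) : 'M[R]_(m, n) := const_mx 1.

(* Put r = p/512 and a = - s * sum_j x_j.  If the vector (B + s 1 1^T) x has norm at
   most (r/2) sqrt(eps n), then at most eps m of its m = n - 1 entries exceed r, so at
   least m - floor(eps m) rows b of B satisfy |<b, x> - a| <= r.  The rows are
   independent, so a union bound over the sets of such rows bounds the probability by
   C(m, floor(eps m)) q^(m - floor(eps m)), where q bounds the probability that one
   row lands in the ball; and C(m, K) <= (e/eps)^(eps m).  The estimate q <= 1 - p is
   a Levy concentration bound for <b, x> with |x| = 1: if some |x_j| > 2r, the ball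
   and its translate by x_j are disjoint and conditioning on b_j gives 1 - p;
   otherwise all x_j are small, the characteristic function
   |E e^(i th <b, x>)|^2 = prod_j (1 - 2p(1-p)(1 - cos(th x_j))) is at most 1/256 at
   the frequencies th = k 32/p, 1 <= |k| <= 15, and an Esseen-type comparison of the
   indicator of the ball with a Fejer kernel gives the bound 1/2 <= 1 - p. *)

From HB Require Import structures.
From mathcomp Require Import all_boot all_order all_algebra.
From mathcomp Require Import all_classical all_reals all_analysis.
From mathcomp Require Import ring lra zify.
Set Implicit Arguments.
Unset Strict Implicit.
Unset Printing Implicit Defensive.
Import Order.TTheory GRing.Theory Num.Theory.
Import numFieldNormedType.Exports.
Local Open Scope ring_scope.

Section TaylorBounds.
Variable R : realType.

Lemma ger0_derive_le_at0 (f df : R -> R) :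
  (forall x : R, is_derive x (1 : R) f (df x)) -> (forall x, 0 <= x -> 0 <= df x) ->
  forall y, 0 <= y -> f 0 <= f y.
Proof.
move=> f_df df_ge0 y y_ge0.
have f_cont : continuous f.
  by move=> x; apply/differentiable_continuous/derivable1_diffP; apply: ex_derive.
have [c c0y Ef] := MVT_segment y_ge0 (fun x _ => f_df x) (continuous_subspaceT f_cont).
rewrite -subr_ge0 Ef mulr_ge0 ?subr_ge0 //; apply: df_ge0.
by move: c0y; rewrite in_itv /= => /andP[].
Qed.

Arguments ger0_derive_le_at0 {f df}.

Ltac derive_poly_trig :=
  apply: is_derive_eq; rewrite ?scaler0 /GRing.scale /= ?mulr1 ?subr0 ?addr0 ?add0r ?sub0r;
  field; rewrite ?pnatr_eq0.

Lemma sin_le_id (y : R) : 0 <= y -> sin y <= y.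
Proof.
have d (x : R) : is_derive x (1 : R) (fun y => y - sin y) (1 - cos x) by exact: is_derive_eq.
have d_ge0 (x : R) : 0 <= x -> 0 <= 1 - cos x by rewrite subr_ge0 cos_le1.
by move=> /(ger0_derive_le_at0 d d_ge0 _) /=; rewrite sin0 !subr0 subr_ge0.
Qed.

Lemma cos_ge_taylor2 (y : R) : 1 - y ^+ 2 / 2 <= cos y.
Proof.
have d (x : R) : is_derive x (1 : R) (fun y => cos y - 1 + y ^+ 2 / 2) (x - sin x).
  by derive_poly_trig.
have d_ge0 (x : R) : 0 <= x -> 0 <= x - sin x by move=> x_ge0; rewrite subr_ge0 sin_le_id.
have := ger0_derive_le_at0 d d_ge0 _ (normr_ge0 y).
rewrite /= cos0 subrr expr0n /= mul0r addr0 cos_norm real_normK ?num_real //; lra.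
Qed.

Lemma sin_ge_taylor3 (y : R) : 0 <= y -> y - y ^+ 3 / 6 <= sin y.
Proof.
have d (x : R) : is_derive x (1 : R) (fun y => sin y - y + y ^+ 3 / 6) (cos x - (1 - x ^+ 2 / 2)).
  by derive_poly_trig.
have d_ge0 (x : R) : 0 <= x -> 0 <= cos x - (1 - x ^+ 2 / 2).
  by rewrite subr_ge0 cos_ge_taylor2.
move=> /(ger0_derive_le_at0 d d_ge0 _) /=.
rewrite sin0 subrr expr0n /= mul0r addr0; lra.
Qed.

Lemma cos_le_taylor4 (y : R) : cos y <= 1 - y ^+ 2 / 2 + (y ^+ 2) ^+ 2 / 24.
Proof.
have d (x : R) : is_derive x (1 : R) (fun y => 1 - y ^+ 2 / 2 + (y ^+ 2) ^+ 2 / 24 - cos y)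
    (sin x - (x - x ^+ 3 / 6)).
  by derive_poly_trig.
have d_ge0 (x : R) : 0 <= x -> 0 <= sin x - (x - x ^+ 3 / 6).
  by move=> x_ge0; rewrite subr_ge0 sin_ge_taylor3.
have := ger0_derive_le_at0 d d_ge0 _ (normr_ge0 y).
rewrite /= cos0 expr0n /= mul0r expr0n /= mul0r subr0 addr0 subrr.
rewrite cos_norm real_normK ?num_real //; lra.
Qed.

Lemma one_sub_cos_ge (a : R) : `|a| <= 2 -> a ^+ 2 / 3 <= 1 - cos a.
Proof.
move=> a_le2; have := cos_le_taylor4 a.
have : a ^+ 2 <= 4.
  by rewrite -real_normK ?num_real // expr2; have := normr_ge0 a; nra.
have := sqr_ge0 a; nra.
Qed.

End TaylorBounds.

Section BernoulliSums.
Variables (R : realType) (p : R).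

(* [Ebern xs g] is the expectation of [g (b_1 * x_1 + ... + b_k * x_k)] for
   independent Bernoulli(p) variables [b_i], where [xs = [:: x_1; ...; x_k]]. *)
Fixpoint Ebern (xs : seq R) (g : R -> R) : R :=
  if xs is x :: xs' then (1 - p) * Ebern xs' g + p * Ebern xs' (fun t => g (x + t))
  else g 0.

Lemma eq_Ebern xs g h : g =1 h -> Ebern xs g = Ebern xs h.
Proof.
elim: xs g h => [|x xs IH] g h gh /=; first exact: gh.
by rewrite (IH g h) // (IH (fun t => g (x + t)) (fun t => h (x + t))).
Qed.

Lemma Ebern_cst xs c : Ebern xs (fun=> c) = c.
Proof. by elim: xs => [|x xs IH] //=; rewrite !IH; ring. Qed.

Lemma EbernD xs g h : Ebern xs (fun t => g t + h t) = Ebern xs g + Ebern xs h.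
Proof.
elim: xs g h => [|x xs IH] g h //=.
rewrite (IH g h) (IH (fun t => g (x + t)) (fun t => h (x + t))); ring.
Qed.

Lemma EbernZ xs c g : Ebern xs (fun t => c * g t) = c * Ebern xs g.
Proof.
elim: xs g => [|x xs IH] g //=.
rewrite (IH g) (IH (fun t => g (x + t))); ring.
Qed.

Lemma Ebern_sum xs (I : Type) (r : seq I) (F : I -> R -> R) :
  Ebern xs (fun t => \sum_(i <- r) F i t) = \sum_(i <- r) Ebern xs (F i).
Proof.
elim: r => [|i r IH].
  by rewrite big_nil -[RHS](Ebern_cst xs); apply: eq_Ebern => t; rewrite big_nil.
by rewrite big_cons -IH -EbernD; apply: eq_Ebern => t; rewrite big_cons.
Qed.

(* [A + i B] is the characteristic function [E e^(i th S)] of the Bernoulli sum [S]. *)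
Lemma Ebern_cos_sin xs (th : R) : exists A B : R,
  [/\ forall phi, Ebern xs (fun t => cos (th * t + phi)) = A * cos phi - B * sin phi,
      forall phi, Ebern xs (fun t => sin (th * t + phi)) = B * cos phi + A * sin phi &
      A ^+ 2 + B ^+ 2 = \prod_(x <- xs) (1 - 2 * p * (1 - p) * (1 - cos (th * x)))].
Proof.
elim: xs => [|x xs [A [B [EA EB AB]]]].
  by exists 1, 0; split => [phi|phi|] /=; rewrite ?big_nil ?mulr0 ?add0r; ring.
set c := cos (th * x); set s := sin (th * x).
exists ((1 - p) * A + p * (A * c - B * s)), ((1 - p) * B + p * (B * c + A * s)).
have shift (f : R -> R) phi :
    (fun t => f (th * (x + t) + phi)) =1 (fun t => f (th * t + (th * x + phi))).
  by move=> t; congr f; ring.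
split => [phi|phi|] /=.
- by rewrite (eq_Ebern _ (shift cos phi)) !EA cosD sinD -/c -/s; ring.
- by rewrite (eq_Ebern _ (shift sin phi)) !EB cosD sinD -/c -/s; ring.
rewrite big_cons -AB -/c.
have -> : ((1 - p) * A + p * (A * c - B * s)) ^+ 2 + ((1 - p) * B + p * (B * c + A * s)) ^+ 2
   = (A ^+ 2 + B ^+ 2) * ((1 - p) ^+ 2 + 2 * p * (1 - p) * c + p ^+ 2 * (c ^+ 2 + s ^+ 2)).
  by ring.
by rewrite cos2Dsin2; ring.
Qed.

Lemma Ebern_cos_le xs (th phi eta : R) : 0 <= eta ->
  \prod_(x <- xs) (1 - 2 * p * (1 - p) * (1 - cos (th * x))) <= eta ^+ 2 ->
  Ebern xs (fun t => cos (th * t + phi)) <= eta.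
Proof.
move=> eta_ge0; have [A [B [-> _ <-]]] := Ebern_cos_sin xs th => AB_le.
set v := A * cos phi - B * sin phi.
have : v ^+ 2 <= A ^+ 2 + B ^+ 2.
  rewrite -[A ^+ 2 + _]mulr1 -(cos2Dsin2 phi).
  have -> : (A ^+ 2 + B ^+ 2) * (cos phi ^+ 2 + sin phi ^+ 2) =
            v ^+ 2 + (A * sin phi + B * cos phi) ^+ 2 by rewrite /v; ring.
  by rewrite lerDl sqr_ge0.
move=> /le_trans /(_ AB_le); rewrite !expr2; nra.
Qed.

Hypotheses (p_ge0 : 0 <= p) (p_le1 : p <= 1).

Lemma ler_Ebern xs g h : (forall t, g t <= h t) -> Ebern xs g <= Ebern xs h.
Proof.
elim: xs g h => [|x xs IH] g h gh /=; first exact: gh.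
by rewrite lerD // ler_wpM2l ?subr_ge0 //; apply: IH.
Qed.

(* Conditioning on the selector of [x]: [(1 - p) g t + p g (x + t) <= 1 - p] since [p <= 1 - p]. *)
Lemma Ebern_pair_le xs g : p <= 1 - p -> (forall t, 0 <= g t <= 1) ->
  (exists2 x, x \in xs & forall t, g t + g (x + t) <= 1) -> Ebern xs g <= 1 - p.
Proof.
move=> p_le_q g01; elim: xs g g01 => [|y xs IH] g g01 [x]; first by rewrite in_nil.
rewrite in_cons => /orP[/eqP -> {x}|x_xs] gx /=.
  rewrite -!EbernZ -EbernD -[leRHS](Ebern_cst xs); apply: ler_Ebern => t.
  have /andP[? ?] := g01 t; have /andP[? ?] := g01 (y + t); have gyt := gx t.
  have : 0 <= (1 - p - p) * g (y + t) by apply: mulr_ge0; lra.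
  have : 0 <= (1 - p) * (1 - g t - g (y + t)) by apply: mulr_ge0; lra.
  lra.
have Ey : Ebern xs (fun t => g (y + t)) <= 1 - p.
  apply: IH => [t|]; first exact: g01.
  by exists x => // t; rewrite addrCA; apply: gx.
have Eg : Ebern xs g <= 1 - p by apply: IH => //; exists x.
apply: le_trans (_ : (1 - p) * (1 - p) + p * (1 - p) <= 1 - p); last by lra.
by rewrite lerD // ler_wpM2l ?subr_ge0.
Qed.

End BernoulliSums.

Lemma prod1B_sum_le1 (R : realDomainType) (s : seq R) : (forall a, a \in s -> 0 <= a <= 1) ->
  (\prod_(a <- s) (1 - a)) * (1 + \sum_(a <- s) a) <= 1.
Proof.
suff : forall s : seq R, (forall a, a \in s -> 0 <= a <= 1) ->
  [/\ (\prod_(a <- s) (1 - a)) * (1 + \sum_(a <- s) a) <= 1,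
      0 <= \prod_(a <- s) (1 - a) & 0 <= \sum_(a <- s) a] by move=> /[apply] [[]].
elim=> [|a {}s IH] s01; first by rewrite !big_nil addr0 mul1r; split.
have [|le1 P_ge0 S_ge0] := IH; first by move=> b b_s; apply: s01; rewrite in_cons b_s orbT.
rewrite !big_cons; have /andP[a_ge0 a_le1] := s01 a (mem_head _ _).
move: le1 P_ge0 S_ge0; set P := \prod_(_ <- _) _; set S := \sum_(_ <- _) _ => le1 P_ge0 S_ge0.
have : 0 <= P * (a * a + a * S) by apply: mulr_ge0 => //; nra.
split; [nra | apply: mulr_ge0 => //; lra | lra].
Qed.

Lemma ord_dist_bounds (R : realDomainType) n (k l : 'I_n.+1) :
  k != l -> 1 <= `|k%:R - l%:R : R| <= n%:R.
Proof.
move=> k_neq_l; have k_le : (k%:R : R) <= n%:R by rewrite ler_nat -ltnS.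
have l_le : (l%:R : R) <= n%:R by rewrite ler_nat -ltnS.
have k_ge0 : (0 : R) <= k%:R by []; have l_ge0 : (0 : R) <= l%:R by [].
have [k_lt_l|l_lt_k|/val_inj k_eq_l] := ltngtP k l; last by rewrite k_eq_l eqxx in k_neq_l.
- move: k_lt_l; rewrite -(ler_nat R) -natr1 => ?.
  by rewrite ler0_norm; [apply/andP; split|]; lra.
- move: l_lt_k; rewrite -(ler_nat R) -natr1 => ?.
  by rewrite ger0_norm; [apply/andP; split|]; lra.
Qed.

Section SmallBall.
Variables (R : realType) (p : R).

Definition ball_ind (r a t : R) : R := if `|t - a| <= r then 1 else 0.

Definition small_radius : R := p / 512.

Lemma Ebern_cos_le_sixteenth xs (th phi : R) : 0 < p -> p <= 2^-1 ->
  \sum_(x <- xs) x ^+ 2 = 1 -> (forall x, x \in xs -> `|x| <= 2 * small_radius) ->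
  32 / p <= `|th| <= 15 * (32 / p) ->
  Ebern p xs (fun t => cos (th * t + phi)) <= 16^-1.
Proof.
move=> p_gt0 p_le_half xs_unit xs_small /andP[th_ge th_le].
have p_ge0 : 0 <= p by exact: ltW.
apply: Ebern_cos_le; first by [].
set f := fun x => 2 * p * (1 - p) * (1 - cos (th * x)).
have f01 a : a \in map f xs -> 0 <= a <= 1.
  move=> /mapP[x _ ->]; rewrite /f /=.
  have := cos_le1 (th * x); have := cos_geN1 (th * x).
  have : 0 <= 2 * p * (1 - p) by nra.
  have : 2 * p * (1 - p) <= 2^-1 by nra.
  by move=> *; apply/andP; split; nra.
have f_ge x : x \in xs -> p * (th * x) ^+ 2 / 3 <= f x.
  move=> x_xs; have /one_sub_cos_ge : `|th * x| <= 2.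
    rewrite normrM; apply: le_trans (_ : 15 * (32 / p) * (2 * small_radius) <= _).
      by rewrite ler_pM ?xs_small.
    have -> : 15 * (32 / p) * (2 * small_radius) = 15 / 8 by rewrite /small_radius; field; lra.
    lra.
  move=> /(ler_wpM2l p_ge0) cos_ge.
  have : 0 <= (1 - 2 * p) * (p * (1 - cos (th * x))).
    by apply: mulr_ge0; [lra | rewrite mulr_ge0 // subr_ge0 cos_le1].
  rewrite /f /=; lra.
have sum_f : 255 <= \sum_(a <- map f xs) a.
  rewrite big_map; apply: le_trans (_ : \sum_(x <- xs) p * (th * x) ^+ 2 / 3 <= _).
    rewrite -mulr_suml -mulr_sumr; under eq_bigr do rewrite exprMn.
    rewrite -mulr_sumr xs_unit mulr1.
    have : (32 / p) ^+ 2 <= th ^+ 2.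
      have d_ge0 : 0 <= 32 / p by rewrite divr_ge0.
      by rewrite -[th ^+ 2]real_normK ?num_real // !expr2; nra.
    move=> /(ler_wpM2l p_ge0); have -> : p * (32 / p) ^+ 2 = 1024 / p by field; lra.
    have : 1024 <= 1024 / p by rewrite ler_pdivlMr //; lra.
    lra.
  by rewrite big_seq [leRHS]big_seq; apply: ler_sum => x; apply: f_ge.
have := prod1B_sum_le1 f01; rewrite big_map.
have : 0 <= \prod_(a <- map f xs) (1 - a).
  by rewrite big_seq prodr_ge0 // => a /f01; rewrite subr_ge0 => /andP[].
rewrite big_map; nra.
Qed.

(* [|sum_(k < 16) e^(i k D u)|^2], i.e. 16 times the Fejer kernel of order 16 at [D u]. *)
Definition fejer16 (D u : R) : R :=
  (\sum_(k < 16) cos (k%:R * D * u)) ^+ 2 + (\sum_(k < 16) sin (k%:R * D * u)) ^+ 2.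

Lemma fejer16E D u :
  fejer16 D u = \sum_(k < 16) \sum_(l < 16) cos ((k%:R - l%:R) * D * u).
Proof.
rewrite /fejer16 !expr2 !mulr_suml -big_split /=; apply: eq_bigr => k _.
rewrite !mulr_sumr -big_split /=; apply: eq_bigr => l _.
by rewrite -cosB; congr cos; ring.
Qed.

Lemma fejer16_ge0 D u : 0 <= fejer16 D u.
Proof. by rewrite addr_ge0 ?sqr_ge0. Qed.

Lemma fejer16_ge64 D u : 0 <= D -> D * `|u| <= 16^-1 -> 64 <= fejer16 D u.
Proof.
move=> D_ge0 Du_le.
have cos_ge (k : 'I_16) : 2^-1 <= cos (k%:R * D * u).
  apply: le_trans (cos_ge_taylor2 _).
  have k_le : (k%:R : R) <= 15 by rewrite ler_nat -ltnS ltn_ord.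
  have : `|k%:R * D * u| <= 15 / 16.
    rewrite -mulrA normrM normrM (ger0_norm D_ge0) ger0_norm //.
    have : 0 <= D * `|u| by rewrite mulr_ge0.
    have : (0 : R) <= k%:R by []; nra.
  rewrite -[_ ^+ 2]real_normK ?num_real // expr2.
  have := normr_ge0 (k%:R * D * u); nra.
have : 8 <= \sum_(k < 16) cos (k%:R * D * u).
  apply: le_trans (ler_sum _ (fun k _ => cos_ge k)).
  by rewrite sumr_const card_ord -mulr_natl; lra.
rewrite /fejer16; have := sqr_ge0 (\sum_(k < 16) sin (k%:R * D * u)); nra.
Qed.

Lemma Ebern_fejer16_term_le xs a (k l : 'I_16) : 0 < p -> p <= 2^-1 ->
  \sum_(x <- xs) x ^+ 2 = 1 -> (forall x, x \in xs -> `|x| <= 2 * small_radius) ->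
  Ebern p xs (fun t => cos ((k%:R - l%:R) * (32 / p) * (t - a))) <= (k == l)%:R + 16^-1.
Proof.
move=> p_gt0 p_le_half xs_unit xs_small; have D_gt0 : 0 < 32 / p by rewrite divr_gt0.
have [->|k_neq_l] := eqVneq k l.
  rewrite -[leRHS](Ebern_cst p xs); apply: ler_Ebern => [||t]; [exact: ltW | lra |].
  by rewrite (le_trans (cos_le1 _)) // lerDl.
rewrite /= add0r (eq_Ebern _ _ (fun t => congr1 cos (mulrBr _ t a))).
rewrite Ebern_cos_le_sixteenth // normrM (gtr0_norm D_gt0).
have /andP[? ?] := ord_dist_bounds R k_neq_l; apply/andP; split; nra.
Qed.

Lemma Ebern_ball_le_half xs a : 0 < p -> p <= 2^-1 ->
  \sum_(x <- xs) x ^+ 2 = 1 -> (forall x, x \in xs -> `|x| <= 2 * small_radius) ->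
  Ebern p xs (ball_ind small_radius a) <= 2^-1.
Proof.
move=> p_gt0 p_le_half xs_unit xs_small.
have p_ge0 : 0 <= p by exact: ltW.
set D := 32 / p.
have D_gt0 : 0 < D by rewrite divr_gt0.
apply: le_trans (_ : Ebern p xs (fun t => 64^-1 * fejer16 D (t - a)) <= _).
  apply: ler_Ebern => // [|t]; first lra.
  rewrite /ball_ind; case: ifP => [ball_t|_]; last by rewrite mulr_ge0 ?fejer16_ge0.
  rewrite ler_pdivlMl // mulr1 fejer16_ge64 ?(ltW D_gt0) //.
  have -> : 16^-1 = D * small_radius by rewrite /D /small_radius; field; lra.
  by rewrite ler_pM2l.
have fejerE t : 64^-1 * fejer16 D (t - a) =
    64^-1 * \sum_(k < 16) \sum_(l < 16) cos ((k%:R - l%:R) * D * (t - a)).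
  by rewrite fejer16E.
rewrite (eq_Ebern _ _ fejerE) EbernZ Ebern_sum.
apply: le_trans (_ : 64^-1 * \sum_(k < 16) \sum_(l < 16) ((k == l)%:R + 16^-1) <= _).
  rewrite ler_wpM2l //; apply: ler_sum => k _.
  by rewrite Ebern_sum; apply: ler_sum => l _; apply: Ebern_fejer16_term_le.
have row_sum (k : 'I_16) : \sum_(l < 16) ((k == l)%:R + 16^-1 : R) = 2.
  rewrite big_split /= (bigD1 k) //= eqxx big1 => [|l]; last by rewrite eq_sym => /negPf ->.
  by rewrite sumr_const card_ord addr0 -[_ *+ 16]mulr_natl /=; lra.
by rewrite (eq_bigr _ (fun k _ => row_sum k)) sumr_const card_ord -[_ *+ 16]mulr_natl; lra.
Qed.

Lemma Ebern_ball_le xs a : 0 < p -> p <= 2^-1 -> \sum_(x <- xs) x ^+ 2 = 1 ->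
  Ebern p xs (ball_ind small_radius a) <= 1 - p.
Proof.
move=> p_gt0 p_le_half xs_unit; have p_ge0 : 0 <= p by exact: ltW.
have ind01 t : 0 <= ball_ind small_radius a t <= 1 by rewrite /ball_ind; case: ifP; lra.
have [/hasP[x x_xs x_big]|/hasPn xs_small] := boolP (has (fun x => 2 * small_radius < `|x|) xs).
  apply: Ebern_pair_le => //; [lra | lra | exists x => // t].
  rewrite /ball_ind; case: ifP => t_in; case: ifP => xt_in; try lra.
  suff : `|x| <= 2 * small_radius by rewrite leNgt x_big.
  have -> : x = (x + t - a) - (t - a) by ring.
  by apply: le_trans (ler_normB _ _) _; lra.
apply: le_trans (Ebern_ball_le_half _ p_gt0 p_le_half xs_unit _) _; last lra.
by move=> x /xs_small; rewrite -leNgt.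
Qed.

End SmallBall.

Lemma exists_subset_card (T : finType) (A : {set T}) k : (k <= #|A|)%N ->
  exists2 B : {set T}, B \subset A & #|B| = k.
Proof.
move=> k_le; exists [set y in take k (enum A)].
  by apply/fintype.subsetP => y; rewrite inE => /mem_take; rewrite mem_enum.
rewrite cardsE; have /card_uniqP -> := take_uniq k (enum_uniq (mem A)).
by rewrite size_takel // -cardE.
Qed.

Section BernoulliMatrices.
Variables (R : realType) (p : R).

Lemma bern_weight_rows m n (M : 'M[bool]_(m, n)) :
  bern_weight p M = \prod_(i < m) bern_weight p (row i M).
Proof.
rewrite /bern_weight; apply: eq_bigr => i _.
by rewrite big_ord1; apply: eq_bigr => j _; rewrite mxE.
Qed.

Lemma sum_bern_weight_prod_rows m n (F : 'I_m -> 'rV[bool]_n -> R) :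
  \sum_(M : 'M[bool]_(m, n)) bern_weight p M * \prod_(i < m) F i (row i M) =
  \prod_(i < m) \sum_(b : 'rV[bool]_n) bern_weight p b * F i b.
Proof.
rewrite bigA_distr_bigA /=.
rewrite (reindex (fun B : {ffun 'I_m -> 'rV[bool]_n} => \matrix_(i < m) B i)) /=.
  apply: eq_bigr => B _; rewrite bern_weight_rows -big_split.
  by apply: eq_bigr => i _; rewrite rowK.
apply: onW_bij; exists (fun M : 'M[bool]_(m, n) => [ffun i => row i M]).
  by move=> B; apply/ffunP => i; rewrite ffunE rowK.
by move=> M; apply/row_matrixP => i; rewrite rowK ffunE.
Qed.

Definition row_cons n (c : bool) (b : 'rV[bool]_n) : 'rV[bool]_n.+1 :=
  \row_j (if unlift ord0 j is Some j' then b 0 j' else c).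

Lemma sum_rV_S n (G : 'rV[bool]_n.+1 -> R) :
  \sum_(b : 'rV[bool]_n.+1) G b = \sum_(c : bool) \sum_(b : 'rV[bool]_n) G (row_cons c b).
Proof.
rewrite pair_big /= (reindex (fun cb : bool * 'rV[bool]_n => row_cons cb.1 cb.2)) //.
apply: onW_bij; exists (fun b : 'rV[bool]_n.+1 => (b 0 0, \row_j b 0 (lift ord0 j))).
  move=> [c b] /=; congr pair; first by rewrite mxE unlift_none.
  by apply/rowP => j; rewrite !mxE liftK.
move=> b; apply/rowP => j; rewrite mxE.
by case: unliftP => [j'|] -> /=; rewrite ?mxE // [0]ord1.
Qed.

Lemma sum_bern_row n (x : 'I_n -> R) (g : R -> R) :
  \sum_(b : 'rV[bool]_n) bern_weight p b * g (\sum_(j < n) (b 0 j)%:R * x j) =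
  Ebern p [seq x j | j <- enum 'I_n] g.
Proof.
elim: n x g => [|n IH] x g.
  rewrite enum_ord0 /=; under eq_bigr do rewrite big_ord0 /bern_weight big_ord1 big_ord0 mul1r.
  by rewrite sumr_const card_mx card_bool expn0 ?muln0.
rewrite sum_rV_S big_bool /= addrC enum_ordSl /= -map_comp.
rewrite -!(IH (fun j => x (lift ord0 j))) !mulr_sumr; congr (_ + _); apply: eq_bigr => b _;
  rewrite /bern_weight !big_ord1 !big_ord_recl !mxE unlift_none /=;
  under eq_bigr do rewrite mxE liftK; under [in X in g X]eq_bigr do rewrite mxE liftK.
  by rewrite mul0r add0r mulrA.
by rewrite mul1r mulrA.
Qed.

Lemma bern_weight_ge0 m n (M : 'M[bool]_(m, n)) : 0 <= p <= 1 -> 0 <= bern_weight p M.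
Proof.
move=> /andP[p_ge0 p_le1].
by apply: prodr_ge0 => i _; apply: prodr_ge0 => j _; case: (M i j); lra.
Qed.

Lemma bern_prob_rows_le m n (E : pred 'M[bool]_(m, n)) (Q : pred 'rV[bool]_n) k :
  0 <= p <= 1 -> (forall M, E M -> k <= #|[set i | Q (row i M)]|)%N ->
  bern_prob p E <= 'C(m, k)%:R * bern_prob p Q ^+ k.
Proof.
move=> p01 E_rows.
pose draws := [set G : {set 'I_m} | #|G| == k].
pose covered M := \sum_(G in draws) \prod_(i in G) (Q (row i M))%:R : R.
have covered_ge1 M : E M -> 1 <= covered M.
  move=> /E_rows /exists_subset_card[G G_Q /eqP G_k].
  rewrite /covered (bigD1 G) ?inE //= big1 => [|i /(fintype.subsetP G_Q)].
    by rewrite lerDl sumr_ge0 // => H _; rewrite prodr_ge0.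
  by rewrite inE => ->.
have row_mass : \sum_(b : 'rV[bool]_n) bern_weight p b = 1.
  have := sum_bern_row (n := n) (fun _ => 0) (fun _ => 1); rewrite Ebern_cst => <-.
  by apply: eq_bigr => b _; rewrite mulr1.
have draw_prob G : G \in draws ->
    \sum_(M : 'M[bool]_(m, n)) bern_weight p M * \prod_(i in G) (Q (row i M))%:R =
    bern_prob p Q ^+ k.
  rewrite inE => /eqP <-; under eq_bigr do rewrite big_mkcond /=.
  rewrite (sum_bern_weight_prod_rows (fun i b => if i \in G then (Q b)%:R else 1 : R)).
  rewrite -prodr_const [RHS]big_mkcond /=; apply: eq_bigr => i _.
  case: (i \in G); last by rewrite -[RHS]row_mass; apply: eq_bigr => b _; rewrite mulr1.
  rewrite /bern_prob [RHS]big_mkcond /=; apply: eq_bigr => b _.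
  by case: (Q b); rewrite ?mulr1 ?mulr0.
apply: le_trans (_ : \sum_M bern_weight p M * covered M <= _).
  rewrite /bern_prob big_mkcond /=; apply: ler_sum => M _; case: ifP => [/covered_ge1 ge1|_].
    by rewrite -[leLHS]mulr1 ler_wpM2l ?bern_weight_ge0.
  by rewrite mulr_ge0 ?bern_weight_ge0 ?sumr_ge0 // => G _; rewrite prodr_ge0.
rewrite /covered; under eq_bigr do rewrite mulr_sumr; rewrite exchange_big /=.
by rewrite (eq_bigr _ draw_prob) sumr_const card_draws card_ord mulr_natl.
Qed.

Lemma mx01_mulmx_row00 n (b : 'rV[bool]_n) (x : 'cV[R]_n) :
  (mx01 R b *m x) 0 0 = \sum_(j < n) (b 0 j)%:R * x j 0.
Proof. by rewrite mxE; apply: eq_bigr => j _; rewrite mxE. Qed.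

Lemma bern_prob_row_ball_le n (x : 'cV[R]_n) (a : R) : 0 < p -> p <= 2^-1 -> norm2 x = 1 ->
  bern_prob p (fun b : 'rV[bool]_n => `|(mx01 R b *m x) 0 0 - a| <= small_radius p) <= 1 - p.
Proof.
move=> p_gt0 p_le_half x_unit.
have xs_unit : \sum_(y <- [seq x j 0 | j <- enum 'I_n]) y ^+ 2 = 1.
  rewrite big_map big_enum /=; move: x_unit; rewrite /norm2 => /(congr1 (fun t => t ^+ 2)).
  by rewrite sqr_sqrtr ?expr1n // sumr_ge0 // => j _; rewrite sqr_ge0.
apply: le_trans (Ebern_ball_le a p_gt0 p_le_half xs_unit).
rewrite -sum_bern_row /bern_prob big_mkcond /=; apply: ler_sum => b _.
by rewrite mx01_mulmx_row00 /ball_ind; case: ifP; rewrite ?mulr1 ?mulr0.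
Qed.

End BernoulliMatrices.

Lemma card_small_entries_ge (R : realType) m (v : 'cV[R]_m) (r c : R) : 0 < r -> 0 <= c ->
  norm2 v <= r * Num.sqrt c -> (m - Num.truncn c <= #|[set i | (`|v i 0| <= r)%R]|)%N.
Proof.
move=> r_gt0 c_ge0 v_le.
set large := [set i | r < `|v i 0|].
have sum_ge0 : 0 <= \sum_(i < m) v i 0 ^+ 2 by rewrite sumr_ge0 // => i _; rewrite sqr_ge0.
have large_le : #|large|%:R * r ^+ 2 <= r ^+ 2 * c.
  apply: le_trans (_ : \sum_(i in large) v i 0 ^+ 2 <= _).
    rewrite mulr_natl -sumr_const; apply: ler_sum => i; rewrite inE => r_lt.
    by rewrite -[v i 0 ^+ 2]real_normK ?num_real // !expr2 ler_pM ?ltW.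
  apply: le_trans (_ : \sum_(i < m) v i 0 ^+ 2 <= _).
    by rewrite [leRHS](bigID (mem large)) /= lerDl sumr_ge0 // => i _; rewrite sqr_ge0.
  move: v_le; have -> : r * Num.sqrt c = Num.sqrt (r ^+ 2 * c).
    by rewrite sqrtrM ?sqr_ge0 // sqrtr_sqr gtr0_norm.
  by rewrite /norm2 ler_sqrt // mulr_ge0 ?sqr_ge0.
have : (#|large| <= Num.truncn c)%N.
  by rewrite truncn_ge_nat // -(ler_pM2r (_ : 0 < r ^+ 2)) ?exprn_gt0 // (mulrC c).
have -> : [set i | `|v i 0| <= r] = ~: large by apply/setP => i; rewrite !inE leNgt.
by have := cardsC large; rewrite card_ord; lia.
Qed.

Section BinomialBounds.
Variable R : realType.

(* [C(m, K) eps^K <= (1 + eps)^m <= e^(eps m)] *)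
Lemma binomial_le_powR (eps : R) m K : 0 < eps <= 1 -> K%:R <= eps * m%:R -> (K <= m)%N ->
  'C(m, K)%:R <= (expR 1 / eps) `^ (eps * m%:R).
Proof.
move=> /andP[eps_gt0 eps_le1] K_le K_le_m; have eps_ge0 := ltW eps_gt0.
have binom_le : 'C(m, K)%:R * eps ^+ K <= (eps + 1) ^+ m.
  rewrite exprD1n (bigD1 (Ordinal (leq_ltn_trans K_le_m (ltnSn m)))) //= mulr_natl lerDl.
  by rewrite sumr_ge0 // => i _; rewrite mulrn_wge0 // exprn_ge0.
have exp_ge : (eps + 1) ^+ m <= expR (eps * m%:R).
  rewrite mulrC expRM_natl lerXn2r ?nnegrE ?expR_ge0 //; last by rewrite addrC expR_ge1Dx.
  by rewrite addr_ge0.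
have inv_le : (eps ^-1) ^+ K <= (eps ^-1) `^ (eps * m%:R).
  rewrite -powR_mulrn ?invr_ge0 //; apply: ler_powR => //; rewrite invf_ge1 //.
apply: le_trans (_ : _ <= expR (eps * m%:R) / eps ^+ K) _.
  by rewrite ler_pdivlMr ?exprn_gt0 //; apply: le_trans binom_le exp_ge.
rewrite -exprVn powRM ?invr_ge0 ?expR_ge0 // -expRM mul1r.
by rewrite ler_wpM2l ?expR_ge0.
Qed.

Lemma binomial_tail_le (eps q : R) m K : 0 < eps <= 1 -> 0 < q <= 1 ->
  K%:R <= eps * m%:R ->
  'C(m, m - K)%:R * q ^+ (m - K) <= (expR 1 / eps) `^ (eps * m%:R) * q `^ (m%:R * (1 - eps)).
Proof.
move=> eps_range /andP[q_gt0 q_le1] K_le.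
have K_le_m : (K <= m)%N.
  rewrite -(ler_nat R); apply: le_trans K_le _.
  by case/andP: eps_range => _ eps_le1; rewrite ler_piMl.
rewrite bin_sub //; apply: ler_pM; rewrite ?exprn_ge0 ?binomial_le_powR ?(ltW q_gt0) //.
rewrite -powR_mulrn ?(ltW q_gt0) // ger_powR ?q_gt0 // natrB // mulrBr mulr1.
by case/andP: eps_range => _ _; lra.
Qed.

Lemma sqrt_mulSn_le (eps : R) m : 0 <= eps -> (0 < m)%N ->
  Num.sqrt (eps * m.+1%:R) <= 2 * Num.sqrt (eps * m%:R).
Proof.
move=> eps_ge0 m_gt0; have m_ge1 : (1 : R) <= m%:R by rewrite ler1n.
rewrite -(@ler_pXn2r _ 2) ?nnegrE ?mulr_ge0 ?sqrtr_ge0 // exprMn !sqr_sqrtr ?mulr_ge0 //.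
by rewrite -natr1; nra.
Qed.

End BinomialBounds.

Lemma mulmx_mx01_shift_entry (R : realType) m n (M : 'M[bool]_(m, n)) (s : R)
    (x : 'cV[R]_n) i :
  ((mx01 R M + s *: ones_mx R m n) *m x) i 0 =
  (mx01 R (row i M) *m x) 0 0 + s * \sum_(j < n) x j 0.
Proof.
rewrite mx01_mulmx_row00 mxE mulr_sumr -big_split; apply: eq_bigr => j _.
by rewrite !mxE mulr1 mulrDl.
Qed.

Theorem lemma3p4 (R : realType) (p : R) (hp0 : 0 < p) (hp1 : p <= 2^-1) :
  exists gamma : R, 0 < gamma /\
  forall (eps : R) (n : nat) (s : R) (x : 'cV[R]_n),
    0 < eps -> eps <= 1 -> (2 <= n)%N -> norm2 x = 1 ->
    bern_prob p
      (fun M : 'M[bool]_(n.-1, n) =>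
         norm2 ((mx01 R M + s *: ones_mx R n.-1 n) *m x)
           <= gamma * Num.sqrt (eps * n%:R))
    <= (expR 1 / eps) `^ (eps * (n.-1)%:R) * (1 - p) `^ ((n.-1)%:R * (1 - eps)).
Proof.
have r_gt0 : 0 < small_radius p by rewrite divr_gt0.
exists (small_radius p / 2); split=> [|eps n s x eps_gt0 eps_le1 n_ge2 x_unit].
  by rewrite divr_gt0.
set m := n.-1; set K := Num.truncn (eps * m%:R); set a := - (s * \sum_(j < n) x j 0).
have n_eq : n = m.+1 by rewrite prednK // ltnW.
have m_gt0 : (0 < m)%N by rewrite /m; lia.
have eps_ge0 : 0 <= eps by exact: ltW.
have epsm_ge0 : 0 <= eps * m%:R by rewrite mulr_ge0.
have K_le : K%:R <= eps * m%:R by rewrite truncn_le.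
have p01 : 0 <= p <= 1 by apply/andP; split; lra.
pose Q (b : 'rV[bool]_n) := `|(mx01 R b *m x) 0 0 - a| <= small_radius p.
apply: le_trans (bern_prob_rows_le (k := m - K) (Q := Q) p01 _) _ => [M M_small|].
  have -> : [set i | Q (row i M)] =
      [set i | `|((mx01 R M + s *: ones_mx R m n) *m x) i 0| <= small_radius p].
    by apply/setP => i; rewrite !inE mulmx_mx01_shift_entry /Q /a opprK.
  apply: card_small_entries_ge => //; apply: le_trans M_small _.
  have := sqrt_mulSn_le eps_ge0 m_gt0; rewrite -n_eq => sqrt_le.
  by rewrite -mulrA ler_pM2l //; lra.
apply: le_trans (binomial_tail_le _ _ K_le); last 2 first.
- by rewrite eps_gt0.
- by apply/andP; split; lra.
rewrite ler_wpM2l // lerXn2r ?nnegrE ?bern_prob_row_ball_le //.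
- by rewrite sumr_ge0 // => b _; rewrite bern_weight_ge0.
- lra.
Qed.
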